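(* Let $G$ be a finite group, let $\pi$ be a set of primes and let $q\in\pi$. Let $\mathcal{S}_{q'}(G_\pi)$ denote the union of all conjugacy classes $g^G$ with $g$ a $\pi$-element of $G$ such that $|g^G|$ is not divisible by $q$. Then $|\mathbf{Z}(G)|_q$ divides $|\mathcal{S}_{q'}(G_\pi)|_q$. Moreover, if $|\mathbf{Z}(G)|_q=|\mathcal{S}_{q'}(G_\pi)|_q$, then $\mathbf{Z}(Q)\le \mathbf{Z}(G)$, where $Q$ is a Sylow $q$-subgroup of $G$.
   Context: A $\pi$-element is an element whose order is divisible only by primes in $\pi$. For a positive integer $n$ and prime $q$, $n_q$ denotes the largest power of $q$ dividing $n$. $|g^G|=|G:C_G(g)|$ is the size of the conjugacy class of $g$; $\mathbf{Z}(\cdot)$ denotes the centre. *)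

From mathcomp Require Import all_boot all_fingroup all_solvable.
Set Implicit Arguments. Unset Strict Implicit. Unset Printing Implicit Defensive.
Local Open Scope group_scope.

Definition Sqpi (gT : finGroupType) (G : {group gT}) (pi : nat_pred) (q : nat)
  : {set gT} :=
  \bigcup_(x in G | pi.-elt x && ~~ (q %| #|x ^: G|)%N) (x ^: G).

From mathcomp Require Import all_boot all_fingroup all_solvable.
Set Implicit Arguments. Unset Strict Implicit. Unset Printing Implicit Defensive.
Local Open Scope group_scope.

(* Let S = S_{q'}(G_pi).  Multiplying by a central q-element preserves both
   being a pi-element and the class size, so the Sylow q-subgroup Zq of Z(G)
   acts freely on S and |Z(G)|_q divides |S|_q.  If equality holds, the set of
   Zq-orbits on S has q'-order, so a Sylow q-subgroup Q, acting on it by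
   conjugation, has a number of fixed orbits prime to q.  These are the orbits
   of elements of S centralising Q: if x ^ g = x z with z in Zq then #[z]
   divides the q'-number |x ^: G|.  As Z(Q) acts freely on S :&: 'C(Q), the
   q-number |Z(Q) : Zq| divides that number of fixed orbits, so Z(Q) = Zq. *)

Section ClassCounting.
Variable gT : finGroupType.
Implicit Types (A : {set gT}) (G H P : {group gT}) (x z : gT).

Lemma mem_astabsR A z : {in A, forall x, x * z \in A} -> z \in 'N(A | 'R).
Proof. by move=> nAz; rewrite !inE; apply/subsetP=> x /nAz; rewrite inE. Qed.

Lemma card_lcosets_acts H A :
  [acts H, on A | 'R] -> (#|H| * #|lcosets H A|)%N = #|A|.
Proof.
move=> actsHA; have partA := orbit_partition actsHA.
have -> : lcosets H A = orbit 'R H @: A.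
  by apply: eq_imset => x; rewrite orbitR lcosetE.
rewrite mulnC (card_uniform_partition (n := #|H|) _ partA) //.
by move=> _ /imsetP[x _ ->]; rewrite orbitR card_lcoset.
Qed.

Lemma centerJ G x z : z \in 'Z(G) -> x \in G -> z ^ x = z.
Proof. by case/centerP=> _ cGz Gx; apply/conjg_fixP/commgP; exact: cGz. Qed.

Lemma class_mulZ G x z : z \in 'Z(G) -> (x * z) ^: G = x ^: G :* z.
Proof.
move=> Zz; rewrite -rcosetE /rcoset /class -imset_comp.
by apply: eq_in_imset => g Gg /=; rewrite conjMg (centerJ Zz Gg).
Qed.

(* The translate of a class by a central z is again a class, so when it meets
   x ^: G the group <[z]> acts freely on x ^: G by right translation. *)
Lemma order_dvd_class_mulZ G x z :
  z \in 'Z(G) -> x * z \in x ^: G -> (#[z] %| #|x ^: G|)%N.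
Proof.
move=> Zz xz_x; have actsZ : [acts <[z]>, on x ^: G | 'R].
  rewrite cycle_subG; apply: mem_astabsR => _ /imsetP[g Gg ->] /=.
  by rewrite -(centerJ Zz Gg) -conjMg -(class_eqP xz_x) memJ_class.
by rewrite orderE -(card_lcosets_acts actsZ) dvdn_mulr.
Qed.

Lemma lcosetJ H x g : g \in 'N(H) -> (x *: H) :^ g = x ^ g *: H.
Proof. by move=> Ng; rewrite conjsMg conjg_set1 (normP Ng). Qed.

Lemma class_cent_Sylow_p'nat p G P y :
  p.-Sylow(G) P -> y \in 'C(P) -> p^'.-nat #|y ^: G|.
Proof.
case/and3P=> sPG _ p'GP cPy; rewrite -index_cent1.
by apply: pnat_dvd (indexgS G _) p'GP; rewrite subsetI sPG sub_cent1.
Qed.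

Lemma mem_Sqpi G pi q x :
  (x \in Sqpi G pi q) = [&& x \in G, pi.-elt x & ~~ (q %| #|x ^: G|)%N].
Proof.
apply/bigcupP/idP=> [[y /and3P[Gy piy qy] /imsetP[g Gg ->]] | /and3P[Gx pix q'x]].
  by rewrite groupJ // p_eltJ piy classGidl.
by exists x; rewrite ?class_refl // Gx pix q'x.
Qed.

Lemma card_Sqpi_gt0 G pi q : prime q -> (0 < #|Sqpi G pi q|)%N.
Proof.
move=> q_pr; apply/card_gt0P; exists 1.
by rewrite mem_Sqpi group1 p_elt1 class1G cards1 dvdn1; case: eqP q_pr => // ->.
Qed.

Lemma Sqpi_conj G pi q x g :
  g \in G -> x \in Sqpi G pi q -> x ^ g \in Sqpi G pi q.
Proof.
move=> Gg; rewrite !mem_Sqpi p_eltJ classGidl //.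
by case/and3P=> Gx -> ->; rewrite groupJ.
Qed.

Lemma Sqpi_mulZ G pi q x z :
  z \in 'Z(G) -> pi.-elt z -> x \in Sqpi G pi q -> x * z \in Sqpi G pi q.
Proof.
move=> Zz piz; rewrite !mem_Sqpi class_mulZ // card_rcoset => /and3P[Gx pix ->].
have /centerP[Gz cGz] := Zz.
by rewrite groupM // p_eltM // /commute (cGz x Gx).
Qed.

End ClassCounting.

Section SylowCenter.
Variables (gT : finGroupType) (G Q : {group gT}) (pi : nat_pred) (q : nat).
Hypotheses (q_pr : prime q) (q_pi : q \in pi) (sylQ : q.-Sylow(G) Q).

Local Notation S := (Sqpi G pi q).
Let Zq := ('Z(G) :&: Q)%G.
Let sylZq : q.-Sylow('Z(G)) Zq := Sylow_setI_normal (center_normal G) sylQ.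
Let qZq : q.-group Zq := pHall_pgroup sylZq.
Let sQG : Q \subset G := pHall_sub sylQ.
Let qQ : q.-group Q := pHall_pgroup sylQ.
Let nZqG : G \subset 'N(Zq) := normal_norm (sub_center_normal (subsetIl _ _)).

Lemma acts_Sylow_center_Sqpi : [acts Zq, on S | 'R].
Proof.
apply/subsetP=> z Zq_z; apply: mem_astabsR => x; apply: Sqpi_mulZ.
  by case/setIP: Zq_z.
exact: pi_pnat (mem_p_elt qZq Zq_z) q_pi.
Qed.

Lemma card_Sqpi_lcosets : (#|Zq| * #|lcosets Zq S|)%N = #|S|.
Proof. exact: card_lcosets_acts acts_Sylow_center_Sqpi. Qed.

Lemma partn_center_dvd_Sqpi : (#|'Z(G)|`_q %| #|S|`_q)%N.
Proof.
rewrite -(card_Hall sylZq) -(part_pnat_id qZq).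
apply: partn_dvd; first exact: card_Sqpi_gt0.
by rewrite -card_Sqpi_lcosets dvdn_mulr.
Qed.

Lemma acts_Sylow_lcosets : [acts Q, on lcosets Zq S | 'Js].
Proof.
apply/subsetP=> g Qg; have Gg := subsetP sQG g Qg.
rewrite !inE; apply/subsetP=> _ /imsetP[x Sx ->]; rewrite inE /=.
apply/imsetP; exists (x ^ g); first exact: Sqpi_conj.
by rewrite !lcosetE lcosetJ ?(subsetP nZqG).
Qed.

Lemma Fix_Sylow_lcosets :
  'Fix_(lcosets Zq S | 'Js)(Q) = lcosets Zq 'C_S(Q).
Proof.
have nZqQ := subset_trans sQG nZqG.
apply/setP=> B; apply/setIP/imsetP=> [[/imsetP[x Sx ->] /afixP fixB] | ].
  exists x => //; rewrite inE Sx; apply/centP=> g Qg.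
  have := fixB g Qg; rewrite /= !lcosetE lcosetJ ?(subsetP nZqQ) // => fix_xg.
  have /lcosetP[z Zq_z xg] : x ^ g \in x *: Zq by rewrite -fix_xg lcoset_refl.
  have /setIP[Zz _] := Zq_z; move: Sx; rewrite mem_Sqpi => /and3P[_ _ q'xG].
  have /eqP z1 : z == 1.
    rewrite -order_eq1; apply/eqP/(pnat_1 (mem_p_elt qZq Zq_z)).
    apply: pnat_dvd (order_dvd_class_mulZ (x := x) Zz _) _.
      by rewrite -xg memJ_class ?(subsetP sQG).
    by rewrite p'natE.
  by apply/commgP/conjg_fixP; rewrite xg z1 mulg1.
case=> x /setIP[Sx cQx] ->; split; first exact: imset_f.
apply/afixP=> g Qg; rewrite /= !lcosetE lcosetJ ?(subsetP nZqQ) //.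
by congr (_ *: _); apply/conjg_fixP/commgP; exact: (centP cQx).
Qed.

Lemma acts_center_Sylow_cent_Sqpi : [acts 'Z(Q), on 'C_S(Q) | 'R].
Proof.
apply/subsetP=> a ZQa; apply: mem_astabsR => x /setIP[Sx cQx].
have /centerP[Qa cQa] := ZQa; have cQxa : x * a \in 'C(Q).
  by rewrite groupM //; apply/centP.
rewrite inE cQxa andbT; move: Sx; rewrite !mem_Sqpi => /and3P[Gx pix _].
have pia : pi.-elt a := pi_pnat (mem_p_elt qQ Qa) q_pi.
have Ga := subsetP sQG a Qa.
rewrite groupM // -p'natE // (class_cent_Sylow_p'nat sylQ cQxa) andbT.
exact: p_eltM (centP cQx a Qa) pix pia.
Qed.

Lemma center_Sylow_sub_center :
  (#|'Z(G)|`_q = #|S|`_q)%N -> 'Z(Q) \subset 'Z(G).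
Proof.
move=> eq_part; set Y := lcosets Zq S; set F := lcosets Zq 'C_S(Q).
have sZqZQ : Zq \subset 'Z(Q).
  rewrite subsetI subsetIr (subset_trans (subsetIl _ _)) //.
  exact: subset_trans (subsetIr G _) (centS sQG).
have q'Y : q^'.-nat #|Y|.
  have := card_Sqpi_lcosets; rewrite (card_Hall sylZq) eq_part.
  rewrite -{2}(partnC q (card_Sqpi_gt0 G pi q_pr)) => /eqP.
  by rewrite eqn_pmul2l ?part_gt0 // => /eqP->; apply: part_pnat.
have q'F : q^'.-nat #|F|.
  move: q'Y; rewrite !p'natE // /dvdn (pgroup_fix_mod qQ acts_Sylow_lcosets).
  by rewrite Fix_Sylow_lcosets.
have dvd_index : (#|'Z(Q) : Zq| %| #|F|)%N.
  have := card_lcosets_acts (subset_trans sZqZQ acts_center_Sylow_cent_Sqpi).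
  rewrite -(card_lcosets_acts acts_center_Sylow_cent_Sqpi) -(Lagrange sZqZQ).
  by rewrite -mulnA => /eqP; rewrite eqn_pmul2l // => /eqP->; apply: dvdn_mulr.
have q_index : q.-nat #|'Z(Q) : Zq|.
  exact: pnat_dvd (dvdn_indexg _ _) (pgroupS (center_sub Q) qQ).
have /eqP := pnat_1 q_index (pnat_dvd dvd_index q'F).
by rewrite indexg_eq1 => /subset_trans; apply; apply: subsetIl.
Qed.

End SylowCenter.

Theorem theoremC (gT : finGroupType) (G : {group gT}) (pi : nat_pred) (q : nat) :
  prime q -> q \in pi ->
  ((partn #|'Z(G)| q %| partn #|Sqpi G pi q| q)%N /\
   (partn #|'Z(G)| q = partn #|Sqpi G pi q| q ->
    forall Q : {group gT}, Q \in 'Syl_q(G) -> 'Z(Q) \subset 'Z(G))).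
Proof.
move=> q_pr q_pi; have [Q sylQ] := Sylow_exists q G.
split; first exact: partn_center_dvd_Sqpi sylQ.
move=> eq_part P; rewrite inE => sylP.
exact: center_Sylow_sub_center sylP eq_part.
Qed.
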